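(* Let $\Gamma$ be a distance-regular graph with diameter $D\ge3$, valency $k$, and $a_1\ne0$. Let $\sigma_0,\dots,\sigma_D$ be a nontrivial pseudo cosine sequence which is tight, with auxiliary parameter $\varepsilon$, and write $\sigma=\sigma_1$. Then $\sigma\ne1$, $(\sigma^2-\sigma_2)(1-\varepsilon\sigma)\ne0$, and $$k=h\,\frac{\sigma-\varepsilon}{\sigma-1},\qquad\text{where}\quad h=\frac{(1-\sigma)(1-\sigma_2)}{(\sigma^2-\sigma_2)(1-\varepsilon\sigma)}.$$
   Context: $\Gamma$ is a finite connected undirected graph without loops or multiple edges, distance-regular with diameter $D$, intersection numbers $a_i,b_i,c_i$ ($c_0=0$, $b_D=0$), valency $k=b_0$, $c_i+a_i+b_i=k$. For $\theta\in\mathbb{R}$ the pseudo cosine sequence for $\theta$ is the sequence of reals $\sigma_0,\dots,\sigma_D$ with $\sigma_0=1$ and $c_i\sigma_{i-1}+a_i\sigma_i+b_i\sigma_{i+1}=\theta\sigma_i$ for $0\le i\le D-1$; nontrivial means $\sigma_1\ne1$. Pseudo cosine sequences $\sigma_i$, $\rho_i$ form a tight pair if $(\sigma_i\rho_i)_{i=0}^D$ is a pseudo cosine sequence. For a tight pair of nontrivial pseudo cosine sequences, an auxiliary parameter is a real $\varepsilon$ with $\sigma_i\rho_i-\sigma_{i-1}\rho_{i-1}=\varepsilon(\sigma_{i-1}\rho_i-\sigma_i\rho_{i-1})$ for $1\le i\le D$. When $a_1\ne0$, a nontrivial pseudo cosine sequence is tight if some nontrivial pseudo cosine sequence forms a tight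 pair with it; its auxiliary parameter is the (uniquely determined) auxiliary parameter of that pair. *)

From HB Require Import structures.
From mathcomp Require Import all_boot all_order all_algebra.
Set Implicit Arguments. Unset Strict Implicit. Unset Printing Implicit Defensive.
Import Order.TTheory GRing.Theory Num.Theory.

Section Graph.
Variables (T : finType) (e : rel T).

Definition simple_graph : Prop := symmetric e /\ irreflexive e.

Definition connected_graph : Prop := forall x y : T, connect e x y.

Fixpoint within (n : nat) (x y : T) : bool :=
  if n is n'.+1 then within n' x y || [exists z, within n' x z && e z y]
  else x == y.

(* path-length distance: least n with a walk of length <= n
   (equals #|T| if no such n < #|T|, impossible in a connected graph) *)
Definition dist (x y : T) : nat :=
  find (fun n => within n x y) (iota 0 #|T|).

Definition diameter : nat := \max_(x : T) \max_(y : T) dist x y.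

Definition distance_regular (D : nat) (a b c : nat -> nat) : Prop :=
  [/\ simple_graph /\ connected_graph, diameter = D, c 0 = 0%N, b D = 0%N &
   forall (i : nat) (x y : T), (i <= D)%N -> dist x y = i ->
     [/\ ((0 < i)%N -> #|[set z | e y z & dist x z == i.-1]| = c i),
         #|[set z | e y z & dist x z == i]| = a i &
         #|[set z | e y z & dist x z == i.+1]| = b i]].
End Graph.

Local Open Scope ring_scope.

Section Pseudo.
Variables (R : realFieldType) (D : nat) (a b c : nat -> nat).

(* pseudo cosine sequence for theta: sigma_0 = 1 and
   c_i sigma_{i-1} + a_i sigma_i + b_i sigma_{i+1} = theta sigma_i, 0<=i<=D-1.
   (For i = 0 the term c_0 sigma_{-1} vanishes since c_0 = 0.) *)
Definition pseudo_cosine_for (theta : R) (s : nat -> R) : Prop :=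
  s 0%N = 1 /\
  forall i : nat, (i < D)%N ->
    (c i)%:R * s i.-1 + (a i)%:R * s i + (b i)%:R * s i.+1 = theta * s i.

Definition pseudo_cosine (s : nat -> R) : Prop :=
  exists theta : R, pseudo_cosine_for theta s.

Definition nontrivial_pcs (s : nat -> R) : Prop :=
  pseudo_cosine s /\ s 1%N <> 1.

Definition tight_pair (s r : nat -> R) : Prop :=
  pseudo_cosine s /\ pseudo_cosine r /\ pseudo_cosine (fun i => s i * r i).

Definition auxiliary_parameter (s r : nat -> R) (eps : R) : Prop :=
  forall i : nat, (1 <= i <= D)%N ->
    s i * r i - s i.-1 * r i.-1 = eps * (s i.-1 * r i - s i * r i.-1).

Definition tight_with_aux (s : nat -> R) (eps : R) : Prop :=
  nontrivial_pcs s /\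
  exists r : nat -> R,
    [/\ nontrivial_pcs r, tight_pair s r & auxiliary_parameter s r eps].
End Pseudo.

(* With θ = kσ the recurrence at i = 1 reads b₁(σ − σ₂) = (1 − σ)(1 + kσ).
   Applying it to σ, to its partner ρ and to the product σρ, and eliminating
   σ₂ and ρ₂, gives b₁(kσρ − 1) = (kσ + 1)(kρ + 1), hence kρ(σ₂ − σ²) = 1 − σ₂.
   The auxiliary parameter at i = 1 gives 1 − εσ = ρ(σ − ε), and combining the
   two relations yields k(σ² − σ₂)(1 − εσ) = (1 − σ₂)(ε − σ), the formula for k.
   The factors do not vanish: σ² = σ₂ forces σ = −1 and then a₁ = 0, while
   1 − εσ = 0 needs ρ = 0 or ε = σ = −1, and both contradict the recurrence at
   i = 2 because a₁, a₂, b₁ > 0 (a₂ > 0 as a₁ > 0 and D ≥ 3). *)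

From HB Require Import structures.
From mathcomp Require Import all_boot all_order all_algebra.
From mathcomp Require Import zify ring lra.
Import Order.TTheory GRing.Theory Num.Theory.

Set Implicit Arguments.
Unset Strict Implicit.
Unset Printing Implicit Defensive.

Section Distance.
Variables (T : finType) (e : rel T).

Lemma within_step n x y z : within e n x y -> e y z -> within e n.+1 x z.
Proof. by move=> wxy eyz; apply/orP; right; apply/existsP; exists y; apply/andP. Qed.

Lemma within_cat n m x y z :
  within e n x y -> within e m y z -> within e (n + m) x z.
Proof.
move=> wxy; elim: m z => [|m IHm] z /=; first by move/eqP <-; rewrite addn0.
case/orP=> [/IHm wxz | /existsP[w /andP[/IHm wxw ewz]]].
  by rewrite addnS /= wxz.
by rewrite addnS; apply: within_step wxw ewz.
Qed.

Lemma within_path x p : path e x p -> within e (size p) x (last x p).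
Proof.
elim: p x => [|y p IHp] x /=; first by rewrite eqxx.
case/andP=> exy /IHp; apply: (within_cat (n := 1)).
by apply: within_step exy; rewrite /= eqxx.
Qed.

Lemma dist_le_within n x y : within e n x y -> dist e x y <= n.
Proof.
move=> wxy; rewrite /dist; have [lt_nT | le_Tn] := ltnP n #|T|.
  rewrite leqNgt; apply/negP => /(before_find 0).
  by rewrite nth_iota // add0n wxy.
by apply: leq_trans (find_size _ _) _; rewrite size_iota.
Qed.

Hypothesis e_conn : connected_graph e.

Lemma within_dist x y : within e (dist e x y) x y.
Proof.
have /connectP[p xp ->] := e_conn x y.
case: (shortenP xp) => p' xp' uniq_p' _.
have lt_p'T : size p' < #|T|.
  by have := max_card (mem (x :: p')); rewrite (card_uniqP uniq_p').
have has_p' : has (fun n => within e n x (last x p')) (iota 0 #|T|).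
  by apply/hasP; exists (size p'); [rewrite mem_iota | exact: within_path].
have := nth_find 0 has_p'; rewrite nth_iota ?add0n //.
by move: has_p'; rewrite has_find size_iota.
Qed.

Lemma dist_triangle x y z : dist e x z <= dist e x y + dist e y z.
Proof. exact/dist_le_within/within_cat/within_dist/within_dist. Qed.

Lemma dist_eq0 x y : (dist e x y == 0) = (x == y).
Proof.
apply/eqP/eqP => [d0 | <-]; first by have := within_dist x y; rewrite d0 => /eqP.
by apply/eqP; rewrite -leqn0; apply: dist_le_within; rewrite /= eqxx.
Qed.

Lemma dist_xx x : dist e x x = 0.
Proof. by apply/eqP; rewrite dist_eq0. Qed.

Lemma dist_prev x z n : dist e x z = n.+1 -> exists2 y, e y z & dist e x y = n.
Proof.
move=> dxz; have := within_dist x z; rewrite dxz /=.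
case/orP=> [/dist_le_within | /existsP[y /andP[/dist_le_within le_n eyz]]].
  by rewrite dxz ltnn.
exists y => //; apply/eqP; rewrite eqn_leq le_n -ltnS -dxz.
apply: leq_trans (dist_triangle x y z) _; rewrite -addn1 leq_add2l.
by apply: dist_le_within; apply: within_step eyz; rewrite /= eqxx.
Qed.

Lemma dist_intermediate x z n : n <= dist e x z -> exists y, dist e x y = n.
Proof.
move/subnK; move: (dist e x z - n) => m.
elim: m z => [|m IHm] z dxz; first by exists z.
by move: dxz; rewrite addSn => /esym/dist_prev[y _ /esym/IHm].
Qed.

Hypothesis e_irr : irreflexive e.

Lemma dist_eq1 x y : (dist e x y == 1) = e x y.
Proof.
apply/eqP/idP => [/dist_prev[z ezy /eqP] | exy].
  by rewrite dist_eq0 => /eqP ->.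
apply/eqP; rewrite eqn_leq lt0n dist_eq0 andbC.
have -> : x != y by apply: contraTneq exy => ->; rewrite e_irr.
by apply: dist_le_within; apply: within_step exy; rewrite /= eqxx.
Qed.

Lemma dist_edge x y : e x y -> dist e x y = 1.
Proof. by rewrite -dist_eq1 => /eqP. Qed.

Hypothesis e_sym : symmetric e.

Lemma card_nbr_dist1 y : #|[set z | e y z & dist e y z == 1]| = #|[set z | e y z]|.
Proof. by apply: eq_card => z; rewrite !inE dist_eq1 andbb. Qed.

Lemma card_nbr_split x y j : dist e x y = j.+1 ->
  #|[set z | e y z]| = #|[set z | e y z & dist e x z == j]|
    + #|[set z | e y z & dist e x z == j.+1]|
    + #|[set z | e y z & dist e x z == j.+2]|.
Proof.
move=> dxy.
have near z : e y z -> [|| dist e x z == j, dist e x z == j.+1 | dist e x z == j.+2].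
  move=> eyz; have := dist_triangle x y z; have := dist_triangle x z y.
  have ezy : e z y by rewrite e_sym.
  by rewrite dxy (dist_edge eyz) (dist_edge ezy); lia.
rewrite -(cardsID [set z | dist e x z == j]).
rewrite -(cardsID [set z | dist e x z == j.+1] (_ :\: _)) addnA.
congr (_ + _ + _); apply: eq_card => z; rewrite !inE.
all: case eyz: (e y z); rewrite ?andbF ?andbT //=.
  by case: eqP => // ->; rewrite ltn_eqF.
by have := near z eyz; do 3 case: eqP => //=; lia.
Qed.

End Distance.

Section DistanceRegular.
Variables (T : finType) (e : rel T) (D : nat) (a b c : nat -> nat).
Hypothesis drg : distance_regular e D a b c.

Let e_sym : symmetric e. Proof. by case: drg => -[[]]. Qed.
Let e_irr : irreflexive e. Proof. by case: drg => -[[]]. Qed.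
Let e_conn : connected_graph e. Proof. by case: drg => -[]. Qed.

Lemma card_nbr_c i x y : 0 < i <= D -> dist e x y = i ->
  #|[set z | e y z & dist e x z == i.-1]| = c i.
Proof.
by case: drg => _ _ _ _ counts /andP[i_gt0 le_iD] /(counts i x y le_iD)[->].
Qed.

Lemma card_nbr_a i x y : i <= D -> dist e x y = i ->
  #|[set z | e y z & dist e x z == i]| = a i.
Proof. by case: drg => _ _ _ _ counts le_iD /(counts i x y le_iD)[]. Qed.

Lemma card_nbr_b i x y : i <= D -> dist e x y = i ->
  #|[set z | e y z & dist e x z == i.+1]| = b i.
Proof. by case: drg => _ _ _ _ counts le_iD /(counts i x y le_iD)[]. Qed.

Lemma exists_dist i : 0 < i <= D -> exists x y, dist e x y = i.
Proof.
case/andP=> i_gt0 le_iD.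
have [/existsP[x /existsP[z le_i]] | ] := boolP [exists x, exists z, i <= dist e x z].
  by have [y] := dist_intermediate e_conn le_i; exists x, y.
rewrite negb_exists => /forallP far; suff : diameter e <= i.-1.
  by case: drg => _ ->; lia.
apply/bigmax_leqP => x _; apply/bigmax_leqP => z _.
by move: (far x); rewrite negb_exists => /forallP/(_ z); lia.
Qed.

Lemma card_nbr_b0 y : #|[set z | e y z]| = b 0.
Proof.
by rewrite -(card_nbr_dist1 e_conn e_irr) (card_nbr_b (leq0n D) (dist_xx e_conn y)).
Qed.

Lemma drg_a0 : 0 < D -> a 0 = 0.
Proof.
move=> D_gt0; have [x [_ _]] := exists_dist (i := 1) D_gt0.
rewrite -(card_nbr_a (leq0n D) (dist_xx e_conn x)); apply: eq_card0 => z.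
by rewrite !inE dist_eq0 //; case: eqP => [->|]; rewrite ?e_irr ?andbF.
Qed.

Lemma drg_c1 : 0 < D -> c 1 = 1.
Proof.
move=> D_gt0; have [x [y dxy]] := exists_dist (i := 1) D_gt0.
rewrite -(card_nbr_c (i := 1) D_gt0 dxy) -[RHS](cards1 x); apply: eq_card => z.
rewrite !inE /= dist_eq0 // eq_sym andbC; case: eqP => // ->.
by rewrite e_sym -(dist_eq1 e_conn e_irr) dxy.
Qed.

Lemma drg_valency i : 0 < i <= D -> c i + a i + b i = b 0.
Proof.
move=> iD; have [x [y dxy]] := exists_dist iD.
case: i iD dxy => // j jD dxy.
rewrite -(card_nbr_b0 y) (card_nbr_split e_conn e_irr e_sym dxy).
have le_jD : j < D by case/andP: jD.
by rewrite (card_nbr_c jD dxy) (card_nbr_a le_jD dxy) (card_nbr_b le_jD dxy).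
Qed.

Lemma drg_b_gt0 i : i < D -> 0 < b i.
Proof.
move=> iD; have [x [z dxz]] := exists_dist (i := i.+1) iD.
have [y eyz dxy] := dist_prev e_conn dxz.
rewrite -(card_nbr_b (ltnW iD) dxy); apply/card_gt0P; exists z.
by rewrite inE eyz dxz eqxx.
Qed.

Lemma drg_a2_gt0 : 3 <= D -> 0 < a 1 -> 0 < a 2.
Proof.
(* Along a geodesic x u y z, a common neighbour t of y and z must be adjacent
   to u when a₂ = 0; it then lies next to y at distance 2 from x. *)
move=> D_ge3 a1_gt0; rewrite lt0n; apply/eqP => a2_0.
have no_a2 v w t : dist e v w = 2 -> e w t -> dist e v t <> 2.
  move=> dvw ewt dvt; have := card_nbr_a (leq_trans (isT : 2 <= 3) D_ge3) dvw.
  by rewrite a2_0 => /eqP; rewrite cards_eq0 => /eqP/setP/(_ t); rewrite !inE ewt dvt.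
have [x [z dxz]] := exists_dist (i := 3) D_ge3.
have [y eyz dxy] := dist_prev e_conn dxz.
have [u euy dxu] := dist_prev e_conn dxy.
have edge := dist_edge e_conn e_irr.
have tri := dist_triangle e_conn.
have duz : dist e u z = 2.
  have := tri u y z; have := tri x u z.
  by rewrite dxz dxu (edge _ _ euy) (edge _ _ eyz); lia.
have : 0 < #|[set t | e z t & dist e y t == 1]|.
  by rewrite (card_nbr_a (leq_trans _ D_ge3) (edge _ _ eyz)).
case/card_gt0P => t; rewrite inE dist_eq1 // => /andP[ezt eyt].
have etz : e t z by rewrite e_sym.
have dut : dist e u t = 1.
  have := tri u y t; have := tri u t z; have := no_a2 _ _ _ duz ezt.
  by rewrite duz (edge _ _ euy) (edge _ _ eyt) (edge _ _ etz); lia.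
apply: (no_a2 _ _ _ dxy eyt).
have := tri x u t; have := tri x t z.
by rewrite dxz dxu dut (edge _ _ etz); lia.
Qed.

End DistanceRegular.

Section PseudoCosine.
Local Open Scope ring_scope.
Variables (R : realFieldType) (D : nat) (a b c : nat -> nat).
Hypotheses (D_ge3 : (3 <= D)%N) (c0 : c 0%N = 0%N) (a0 : a 0%N = 0%N)
  (c1 : c 1%N = 1%N) (valency1 : (c 1 + a 1 + b 1)%N = b 0%N)
  (valency2 : (c 2 + a 2 + b 2)%N = b 0%N).

Local Notation k := ((b 0%N)%:R : R).

Let D_gt1 : (1 < D)%N := ltnW D_ge3.
Let D_gt0 : (0 < D)%N := ltnW D_gt1.

Let k_eq1 : k = 1 + (a 1%N)%:R + (b 1%N)%:R.
Proof. by rewrite -valency1 c1 !natrD. Qed.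

Let k_eq2 : k = (c 2%N)%:R + (a 2%N)%:R + (b 2%N)%:R.
Proof. by rewrite -valency2 !natrD. Qed.

Lemma pseudo_cosine_theta theta s :
  pseudo_cosine_for D a b c theta s -> theta = k * s 1%N.
Proof.
case=> s0 rec; have := rec 0%N D_gt0.
by rewrite c0 a0 s0 !mulr0n !mul0r !add0r mulr1 => ->.
Qed.

Lemma pseudo_cosine_rec1 s : pseudo_cosine D a b c s ->
  (b 1%N)%:R * (s 1%N - s 2%N) = (1 - s 1%N) * (1 + k * s 1%N).
Proof.
case=> theta pcs_s; have [s0 rec] := pcs_s.
have := rec 1%N D_gt1.
by rewrite /= c1 s0 (pseudo_cosine_theta pcs_s) k_eq1 => E; lra.
Qed.

Lemma pseudo_cosine_rec2 s : pseudo_cosine D a b c s ->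
  (c 2%N)%:R * s 1%N + (a 2%N)%:R * s 2%N + (b 2%N)%:R * s 3%N = k * s 1%N * s 2%N.
Proof.
case=> theta pcs_s; have [_ rec] := pcs_s.
by rewrite -(pseudo_cosine_theta pcs_s); exact: rec 2%N D_ge3.
Qed.

Section TightPair.
Variables (s r : nat -> R) (eps : R).
Hypotheses (tight : tight_pair D a b c s r)
  (s1_neq1 : s 1%N <> 1) (r1_neq1 : r 1%N <> 1) (b1_gt0 : (0 < b 1)%N).

Let b1_neq0 : (b 1%N)%:R != 0 :> R.
Proof. by rewrite pnatr_eq0 -lt0n. Qed.

Let s1_sq_eq1 : s 1%N ^+ 2 = 1 -> s 1%N = -1.
Proof.
move=> sq; have : (s 1%N - 1) * (s 1%N + 1) = s 1%N ^+ 2 - 1 by ring.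
by rewrite sq subrr => /eqP; rewrite mulf_eq0 subr_eq0 addr_eq0 => /orP[/eqP|/eqP].
Qed.

Lemma tight_pair_rel :
  (b 1%N)%:R * (k * s 1%N * r 1%N - 1) = (k * s 1%N + 1) * (k * r 1%N + 1).
Proof.
have [/pseudo_cosine_rec1 Es [/pseudo_cosine_rec1 Er /pseudo_cosine_rec1 /= Esr]] :=
  tight.
have : (1 - s 1%N) * (1 - r 1%N) * ((b 1%N)%:R * (k * s 1%N * r 1%N - 1)
          - (k * s 1%N + 1) * (k * r 1%N + 1)) = 0.
  (* The bracket vanishes identically once the three right-hand sides of the
     step-one recurrences are replaced by their left-hand sides. *)
  transitivity (- ((b 1%N)%:R * ((1 - s 1%N * r 1%N) * (1 + k * (s 1%N * r 1%N)))
     - (b 1%N)%:R ^+ 2 * s 1%N * r 1%N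
     + ((b 1%N)%:R * s 1%N - (1 - s 1%N) * (1 + k * s 1%N))
       * ((b 1%N)%:R * r 1%N - (1 - r 1%N) * (1 + k * r 1%N)))); first by ring.
  by rewrite -Es -Er -Esr; ring.
move/eqP; rewrite !mulf_eq0 !subr_eq0.
by case/orP=> [/orP[] /eqP/esym | /eqP].
Qed.

Lemma tight_pair_s2 : k * r 1%N * (s 2%N - s 1%N ^+ 2) = 1 - s 2%N.
Proof.
have [/pseudo_cosine_rec1 Es _] := tight.
have : (b 1%N)%:R * (k * r 1%N * (s 2%N - s 1%N ^+ 2) - (1 - s 2%N)) =
    (1 - s 1%N) * ((b 1%N)%:R * (k * s 1%N * r 1%N - 1)
                   - (k * s 1%N + 1) * (k * r 1%N + 1)).
  pose A := (b 1%N)%:R * (s 1%N - s 2%N).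
  transitivity (k * r 1%N * ((b 1%N)%:R * s 1%N - A - (b 1%N)%:R * s 1%N ^+ 2)
                - (b 1%N)%:R + (b 1%N)%:R * s 1%N - A); first by rewrite /A; ring.
  by rewrite /A Es; ring.
rewrite tight_pair_rel subrr mulr0 => /eqP; rewrite mulf_eq0 (negbTE b1_neq0).
by rewrite subr_eq0 => /eqP.
Qed.

Hypothesis aux : auxiliary_parameter D s r eps.

Lemma auxiliary_one_sub_eps : 1 - eps * s 1%N = r 1%N * (s 1%N - eps).
Proof.
have [[_ [s0 _]] [[_ [r0 _]] _]] := tight.
by have := aux (i := 1) D_gt0; rewrite /= s0 r0 => E; lra.
Qed.

Hypothesis a1_gt0 : (0 < a 1)%N.

Lemma tight_pair_s1_sqr_sub_s2_neq0 : s 1%N ^+ 2 - s 2%N != 0.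
Proof.
rewrite subr_eq0; apply/eqP => sq.
have s2_1 : s 2%N = 1.
  by move: tight_pair_s2; rewrite -sq subrr mulr0 => /esym/subr0_eq/esym.
have s1_m1 : s 1%N = -1 by apply: s1_sq_eq1; rewrite sq.
have [/pseudo_cosine_rec1 + _] := tight; rewrite s2_1 s1_m1 k_eq1.
have : 0 < (a 1%N)%:R :> R by rewrite ltr0n.
lra.
Qed.

Hypothesis a2_gt0 : (0 < a 2)%N.

Lemma tight_pair_r1_neq0 : r 1%N != 0.
Proof.
apply/eqP => r1_0; have [ps [pr psr]] := tight.
have s2_1 : s 2%N = 1.
  by move: tight_pair_s2; rewrite r1_0 mulr0 mul0r => /esym/subr0_eq/esym.
have r2_neq0 : r 2%N != 0.
  by apply/eqP => r2_0; have := pseudo_cosine_rec1 pr; rewrite r1_0 r2_0; lra.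
have := pseudo_cosine_rec2 pr; have := pseudo_cosine_rec2 psr.
rewrite /= r1_0 s2_1 !(mulr0, mul0r, mul1r, add0r) => Esr Er.
have s3_1 : s 3%N = 1.
  have : (b 2%N)%:R * r 3%N * (s 3%N - 1) = 0 by lra.
  move/eqP; rewrite mulf_eq0 subr_eq0 => /orP[/eqP b2r3_0 | /eqP //].
  move: Er; rewrite b2r3_0 addr0 => /eqP; rewrite mulf_eq0 (negbTE r2_neq0).
  by rewrite pnatr_eq0 eqn0Ngt a2_gt0.
have := pseudo_cosine_rec2 ps; rewrite s2_1 s3_1 k_eq2 => Es.
have : ((a 2%N)%:R + (b 2%N)%:R) * (1 - s 1%N) = 0 by lra.
move/eqP; rewrite mulf_eq0 subr_eq0 => /orP[|/eqP/esym //].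
by rewrite -natrD pnatr_eq0 addn_eq0 eqn0Ngt a2_gt0.
Qed.

Lemma tight_pair_eps_neq_s1 : eps != s 1%N.
Proof.
apply/eqP => eps_s1; have [ps [pr psr]] := tight.
have s1_m1 : s 1%N = -1.
  apply: s1_sq_eq1; have := auxiliary_one_sub_eps.
  by rewrite eps_s1 subrr mulr0 => E; lra.
have kr1 : k * r 1%N = -1.
  have := tight_pair_rel; rewrite s1_m1 => E.
  have : (k * r 1%N + 1) * (a 1%N)%:R = 0 by rewrite k_eq1 in E *; lra.
  move/eqP; rewrite mulf_eq0 pnatr_eq0 eqn0Ngt a1_gt0 orbF addr_eq0.
  by move/eqP.
have r2_r1 : r 2%N = r 1%N.
  have := pseudo_cosine_rec1 pr; rewrite kr1 subrr mulr0 => /eqP.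
  by rewrite mulf_eq0 (negbTE b1_neq0) subr_eq0 => /eqP.
have := aux (i := 3) D_ge3; rewrite /= eps_s1 s1_m1 r2_r1 => A3.
have : (s 3%N + s 2%N) * (r 3%N - r 1%N) = 0 by lra.
move/eqP; rewrite mulf_eq0 addr_eq0 subr_eq0 => /orP[/eqP s3E | /eqP r3_r1].
  have E1 : s 2%N * ((c 2%N)%:R + 2 * (a 2%N)%:R) = (c 2%N)%:R.
    by have := pseudo_cosine_rec2 ps; rewrite s1_m1 s3E k_eq2 => E; lra.
  have E2 : (b 1%N)%:R * s 2%N = 2 * (a 1%N)%:R + (b 1%N)%:R.
    by have := pseudo_cosine_rec1 ps; rewrite s1_m1 k_eq1 => E; lra.
  have : (b 1%N)%:R * (c 2%N)%:R =
      (2 * (a 1%N)%:R + (b 1%N)%:R) * ((c 2%N)%:R + 2 * (a 2%N)%:R) :> R.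
    by rewrite -E2 -{1}E1; ring.
  (* i.e. 0 = 2a₁c₂ + 4a₁a₂ + 2a₂b₁ *)
  have : 0 < (a 1%N)%:R * (a 2%N)%:R :> R by rewrite -natrM ltr0n muln_gt0 a1_gt0.
  have : 0 <= (a 1%N)%:R * (c 2%N)%:R :> R by rewrite -natrM ler0n.
  have : 0 <= (a 2%N)%:R * (b 1%N)%:R :> R by rewrite -natrM ler0n.
  lra.
have := pseudo_cosine_rec2 pr; rewrite r2_r1 r3_r1 -!mulrDl -k_eq2 kr1 => E.
by apply: r1_neq1; lra.
Qed.

Lemma tight_pair_one_sub_eps_neq0 : 1 - eps * s 1%N != 0.
Proof.
rewrite auxiliary_one_sub_eps mulf_neq0 ?tight_pair_r1_neq0 //.
by rewrite subr_eq0 eq_sym tight_pair_eps_neq_s1.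
Qed.

Lemma tight_pair_valency :
  k * (s 1%N ^+ 2 - s 2%N) * (1 - eps * s 1%N) = (1 - s 2%N) * (eps - s 1%N).
Proof. by rewrite -tight_pair_s2 auxiliary_one_sub_eps; ring. Qed.

End TightPair.

End PseudoCosine.

Local Open Scope ring_scope.

Theorem lemma13p1 (T : finType) (e : rel T) (D : nat) (a b c : nat -> nat)
  (R : realFieldType) (s : nat -> R) (eps : R) :
  distance_regular e D a b c ->
  (3 <= D)%N ->
  a 1%N <> 0%N ->
  tight_with_aux D a b c s eps ->
  let sg := s 1%N in
  let h := (1 - sg) * (1 - s 2%N) / ((sg ^+ 2 - s 2%N) * (1 - eps * sg)) in
  [/\ sg <> 1,
      (sg ^+ 2 - s 2%N) * (1 - eps * sg) <> 0 &
      (b 0%N)%:R = h * ((sg - eps) / (sg - 1))].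
Proof.
move=> drg D_ge3 a1_neq0 [[_ s1_neq1] [r [[_ r1_neq1] tight aux]]] sg h.
have D_gt0 : (0 < D)%N by apply: leq_trans D_ge3.
have a1_gt0 : (0 < a 1)%N by rewrite lt0n; apply/eqP.
have [_ _ c0 _ _] := drg.
have a0 := drg_a0 drg D_gt0; have c1 := drg_c1 drg D_gt0.
have valency1 := drg_valency drg (i := 1) D_gt0.
have valency2 := drg_valency drg (i := 2) (ltnW D_ge3).
have b1_gt0 := drg_b_gt0 drg (ltnW D_ge3).
have a2_gt0 := drg_a2_gt0 drg D_ge3 a1_gt0.
have sq_neq0 := tight_pair_s1_sqr_sub_s2_neq0 D_ge3 c0 a0 c1 valency1 tight
  s1_neq1 r1_neq1 b1_gt0 a1_gt0.
have eps_neq0 := tight_pair_one_sub_eps_neq0 D_ge3 c0 a0 c1 valency1 valency2 tight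
  s1_neq1 r1_neq1 b1_gt0 aux a1_gt0 a2_gt0.
have := tight_pair_valency D_ge3 c0 a0 c1 valency1 tight s1_neq1 r1_neq1 b1_gt0 aux.
have s1_sub1 : s 1%N - 1 != 0 by rewrite subr_eq0; apply/eqP.
rewrite /h /sg -mulrA => val; split => //; first by apply/eqP; rewrite mulf_neq0.
rewrite -[LHS](mulfK (mulf_neq0 sq_neq0 eps_neq0)) val.
by field; rewrite s1_sub1 sq_neq0 eps_neq0.
Qed.
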